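(* Let $N\subseteq QI(\mathbb{R}_{+})$ be the set of classes $[f]$ of quasi-isometries $f$ of $\mathbb{R}_+$ satisfying $\lim_{x\to\infty} f(x)/x=1$. Then $N$ is a normal subgroup of $QI(\mathbb{R}_{+})$ and the center of the quotient group $QI(\mathbb{R}_{+})/N$ is trivial.
   Context: $\mathbb{R}_+=[0,\infty)$ with the Euclidean metric $d$. A quasi-isometry of a metric space $(X,d)$ is a map $f:X\to X$ for which there are constants $\mu\ge1$, $\delta>0$, $M>0$ with $\mu^{-1}d(x,y)-\delta\le d(f(x),f(y))\le \mu d(x,y)+\delta$ for all $x,y\in X$ and every point of $X$ within distance $M$ of $f(X)$. Two maps $f,g:X\to X$ are equivalent if $\sup_x d(f(x),g(x))<\infty$; $[f]$ denotes the class of $f$, and $QI(X)$ is the group of classes of quasi-isometries of $X$ under $[f][g]=[f\circ g]$. (The condition $\lim f(x)/x=1$ depends only on the class $[f]$.) *)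

From Stdlib Require Import Reals.
From Coquelicot Require Import Coquelicot.
Open Scope R_scope.

(* Maps of R_+ = [0,oo) are represented by functions R -> R; only their
   values on [0,oo) matter, and they must send [0,oo) into [0,oo). *)

Definition is_QI (f : R -> R) : Prop :=
  (forall x, 0 <= x -> 0 <= f x) /\
  exists mu delta M : R, 1 <= mu /\ 0 < delta /\ 0 < M /\
    (forall x y, 0 <= x -> 0 <= y ->
       / mu * Rabs (x - y) - delta <= Rabs (f x - f y) /\
       Rabs (f x - f y) <= mu * Rabs (x - y) + delta) /\
    (forall y, 0 <= y -> exists x, 0 <= x /\ Rabs (f x - y) <= M).

(* f ~ g : sup_{x in R_+} |f x - g x| < oo  (so [f] = [g]). *)
Definition qi_equiv (f g : R -> R) : Prop :=
  exists C : R, forall x, 0 <= x -> Rabs (f x - g x) <= C.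

Definition qi_inverse (g f : R -> R) : Prop :=
  is_QI g /\ qi_equiv (fun x => g (f x)) (fun x => x)
          /\ qi_equiv (fun x => f (g x)) (fun x => x).

Definition inN (f : R -> R) : Prop :=
  is_QI f /\ is_lim (fun x => f x / x) p_infty 1.

From Stdlib Require Import Reals Lra Psatz.
From Coquelicot Require Import Coquelicot.
Open Scope R_scope.

(* For a quasi-isometry f, [f] lies in N exactly when |f x - x| <= e x + B_e for
   every e > 0.  This sublinear closeness to the identity survives bounded
   perturbations, precomposition with linearly bounded maps and postcomposition
   with coarsely Lipschitz maps, which gives the subgroup and normality claims.

   For the center, test f against the bi-Lipschitz maps
   g(y) = y (1 + sin (w ln y - th) / 8).  If [f][g] = [g][f][h] with h in N, then
   at points x where g x is close to x, comparing f (g x) with g (f (h x)) shows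
   that g (f x) = f x + o(x), i.e. sin (w ln (f x) - th) is small.  With w so
   small that |w ln (f x / x)| <= 1, this forces w ln (f x / x) to be small,
   and finitely many phases th cover all x; hence ln (f x / x) -> 0. *)

Lemma is_lim_p_infty_iff (F : R -> R) (l : R) :
  is_lim F p_infty l <->
  forall eps, 0 < eps -> Rbar_locally p_infty (fun x => Rabs (F x - l) < eps).
Proof.
  rewrite <- is_lim_spec; split.
  - intros H eps Heps; exact (H (mkposreal eps Heps)).
  - intros H [eps Heps]; exact (H eps Heps).
Qed.

Lemma filter_forall_le_nat {T} (F : (T -> Prop) -> Prop) {FF : Filter F}
  (P : nat -> T -> Prop) :
  (forall j, F (P j)) -> forall N, F (fun x => forall j, (j <= N)%nat -> P j x).
Proof.
  intros HP N; induction N as [|N IH].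
  - generalize (HP 0%nat); apply filter_imp.
    intros x Hx j Hj; replace j with 0%nat by lia; exact Hx.
  - generalize (filter_and _ _ IH (HP (S N))); apply filter_imp.
    intros x [Hle HS] j Hj.
    destruct (Nat.eq_dec j (S N)) as [->|Hne]; [exact HS|apply Hle; lia].
Qed.

Lemma eventually_gt (a : R) : Rbar_locally p_infty (fun x => a < x).
Proof. exists a; auto. Qed.

Lemma Rabs_triang_3 (a b c e : R) :
  Rabs (a - b) <= Rabs (a - c) + Rabs (e - c) + Rabs (e - b).
Proof.
  replace (a - b) with ((a - c) - (e - c) + (e - b)) by ring.
  eapply Rle_trans; [apply Rabs_triang|]; apply Rplus_le_compat_r.
  eapply Rle_trans; [apply Rabs_triang|]; rewrite Rabs_Ropp; lra.
Qed.

Lemma is_QI_intro (f : R -> R) mu d M :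
  (forall x, 0 <= x -> 0 <= f x) -> 1 <= mu -> 0 <= d -> 0 <= M ->
  (forall x y, 0 <= x -> 0 <= y ->
     / mu * Rabs (x - y) - d <= Rabs (f x - f y) <= mu * Rabs (x - y) + d) ->
  (forall y, 0 <= y -> exists x, 0 <= x /\ Rabs (f x - y) <= M) -> is_QI f.
Proof.
  intros Hf0 Hmu Hd HM Hbi Hsurj; split; [exact Hf0|].
  exists mu, (d + 1), (M + 1); repeat split; try lra.
  - destruct (Hbi x y) as [A _]; auto; lra.
  - destruct (Hbi x y) as [_ B]; auto; lra.
  - intros y Hy; destruct (Hsurj y Hy) as [x [Hx Hfx]]; exists x; split; [exact Hx|lra].
Qed.

Lemma is_QI_id : is_QI (fun x => x).
Proof.
  apply (is_QI_intro _ 1 0 0); try lra.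
  - intros x Hx; exact Hx.
  - intros x y _ _; rewrite Rinv_1; lra.
  - intros y Hy; exists y; split; [exact Hy|]; rewrite Rminus_diag, Rabs_R0; lra.
Qed.

Lemma is_QI_comp f g : is_QI f -> is_QI g -> is_QI (fun x => f (g x)).
Proof.
  intros [Hf0 [mf [df [Mf [Hmf [Hdf [HMf [Hbf Hsf]]]]]]]]
         [Hg0 [mg [dg [Mg [Hmg [Hdg [HMg [Hbg Hsg]]]]]]]].
  apply (is_QI_intro _ (mf * mg) (mf * dg + df) (mf * Mg + df + Mf)); auto; try nra.
  - intros x y Hx Hy.
    destruct (Hbg x y Hx Hy) as [A B].
    destruct (Hbf (g x) (g y) (Hg0 x Hx) (Hg0 y Hy)) as [C D].
    assert (0 < / mf) by (apply Rinv_0_lt_compat; lra).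
    assert (/ mf <= 1) by (rewrite <- Rinv_1; apply Rinv_le_contravar; lra).
    pose proof (Rabs_pos (x - y)).
    rewrite Rinv_mult; split.
    + assert (/ mf * (/ mg * Rabs (x - y) - dg) <= / mf * Rabs (g x - g y))
        by (apply Rmult_le_compat_l; lra).
      nra.
    + assert (mf * Rabs (g x - g y) <= mf * (mg * Rabs (x - y) + dg))
        by (apply Rmult_le_compat_l; lra).
      nra.
  - intros y Hy; destruct (Hsf y Hy) as [z [Hz Hfz]].
    destruct (Hsg z Hz) as [x [Hx Hgx]]; exists x; split; [exact Hx|].
    destruct (Hbf (g x) z (Hg0 x Hx) Hz) as [_ D].
    assert (mf * Rabs (g x - z) <= mf * Mg) by (apply Rmult_le_compat_l; lra).
    replace (f (g x) - y) with ((f (g x) - f z) + (f z - y)) by ring.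
    eapply Rle_trans; [apply Rabs_triang|lra].
Qed.

Lemma is_QI_coarse_lipschitz f : is_QI f -> exists mu d, 0 <= mu /\
  forall x y, 0 <= x -> 0 <= y -> Rabs (f x - f y) <= mu * Rabs (x - y) + d.
Proof.
  intros [_ [mu [d [M [Hmu [_ [_ [Hb _]]]]]]]].
  exists mu, d; split; [lra|]; intros x y Hx Hy; apply (Hb x y Hx Hy).
Qed.

Lemma is_QI_linear_bound f : is_QI f ->
  exists a b, forall x, 0 <= x -> 0 <= f x <= a * x + b.
Proof.
  intros Hf; destruct (is_QI_coarse_lipschitz f Hf) as [mu [d [_ Hlip]]].
  exists mu, (f 0 + d); intros x Hx; split; [exact (proj1 Hf x Hx)|].
  specialize (Hlip x 0 Hx (Rle_refl 0)).
  rewrite Rminus_0_r, (Rabs_pos_eq x) in Hlip by lra.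
  apply Rabs_le_between in Hlip; lra.
Qed.

Lemma is_QI_growth f : is_QI f -> exists m, 1 <= m /\
  Rbar_locally p_infty (fun x => x / m <= f x <= m * x).
Proof.
  intros [H0 [mu [d [M [Hmu [Hd [_ [Hb _]]]]]]]].
  pose proof (H0 0 (Rle_refl 0)) as Hf0.
  exists (2 * mu); split; [lra|]; exists (2 * mu * (f 0 + d)); intros x Hx.
  assert (Hx0 : 0 <= x) by nra.
  destruct (Hb x 0 Hx0 (Rle_refl 0)) as [A B].
  rewrite Rminus_0_r, (Rabs_pos_eq x) in A, B by lra.
  apply Rabs_le_between in B; split; [|nra].
  assert (Hmm : mu * / mu = 1) by (field; lra).
  assert (0 < / mu) by (apply Rinv_0_lt_compat; lra).
  apply Rmult_le_reg_r with (2 * mu); [lra|].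
  replace (x / (2 * mu) * (2 * mu)) with x by (field; lra).
  assert (Hmx : mu * (/ mu * x) = x) by (field; lra).
  destruct (Rle_dec (f 0) (f x)).
  - rewrite Rabs_pos_eq in A by lra.
    assert (mu * (/ mu * x - d) <= mu * (f x - f 0)) by (apply Rmult_le_compat_l; lra).
    nra.
  - rewrite Rabs_left1 in A by lra.
    assert (mu * (/ mu * x - d) <= mu * (- (f x - f 0))) by (apply Rmult_le_compat_l; lra).
    assert (0 <= mu * f x) by (apply Rmult_le_pos; [lra|exact (H0 x Hx0)]).
    nra.
Qed.

(** * Sublinear closeness *)

Definition sublinearly_close (f g : R -> R) : Prop :=
  forall e, 0 < e -> exists B, forall x, 0 <= x -> Rabs (f x - g x) <= e * x + B.

Lemma qi_equiv_sublinearly_close f g : qi_equiv f g -> sublinearly_close f g.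
Proof.
  intros [C HC] e He; exists C; intros x Hx.
  specialize (HC x Hx); assert (0 <= e * x) by (apply Rmult_le_pos; lra); lra.
Qed.

Lemma sublinearly_close_sym f g : sublinearly_close f g -> sublinearly_close g f.
Proof.
  intros H e He; destruct (H e He) as [B HB]; exists B; intros x Hx.
  rewrite Rabs_minus_sym; exact (HB x Hx).
Qed.

Lemma sublinearly_close_trans f g k :
  sublinearly_close f g -> sublinearly_close g k -> sublinearly_close f k.
Proof.
  intros Hfg Hgk e He.
  destruct (Hfg (e / 2)) as [B1 H1]; [lra|]; destruct (Hgk (e / 2)) as [B2 H2]; [lra|].
  exists (B1 + B2); intros x Hx.
  replace (f x - k x) with ((f x - g x) + (g x - k x)) by ring.
  eapply Rle_trans; [apply Rabs_triang|].
  specialize (H1 x Hx); specialize (H2 x Hx); lra.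
Qed.

Lemma sublinearly_close_comp_r f g k a b :
  sublinearly_close f g -> (forall x, 0 <= x -> 0 <= k x <= a * x + b) ->
  sublinearly_close (fun x => f (k x)) (fun x => g (k x)).
Proof.
  intros Hfg Hk e He.
  assert (Ha : 0 < Rabs a + 1) by (pose proof (Rabs_pos a); lra).
  destruct (Hfg (e / (Rabs a + 1))) as [B HB]; [apply Rdiv_lt_0_compat; lra|].
  exists (e / (Rabs a + 1) * Rabs b + B); intros x Hx.
  destruct (Hk x Hx) as [Hk0 Hk1]; specialize (HB (k x) Hk0).
  assert (Hkx : k x <= (Rabs a + 1) * x + Rabs b).
  { pose proof (Rle_abs a); pose proof (Rle_abs b); nra. }
  assert (Hee : e / (Rabs a + 1) * (Rabs a + 1) = e) by (field; lra).
  assert (0 < e / (Rabs a + 1)) by (apply Rdiv_lt_0_compat; lra).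
  assert (e / (Rabs a + 1) * k x <= e / (Rabs a + 1) * ((Rabs a + 1) * x + Rabs b))
    by (apply Rmult_le_compat_l; lra).
  nra.
Qed.

Lemma sublinearly_close_comp_l f g k mu d :
  0 <= mu ->
  (forall y z, 0 <= y -> 0 <= z -> Rabs (f y - f z) <= mu * Rabs (y - z) + d) ->
  (forall x, 0 <= x -> 0 <= g x /\ 0 <= k x) ->
  sublinearly_close g k -> sublinearly_close (fun x => f (g x)) (fun x => f (k x)).
Proof.
  intros Hmu Hlip Hgk Hclose e He.
  destruct (Hclose (e / (mu + 1))) as [B HB]; [apply Rdiv_lt_0_compat; lra|].
  exists (mu * B + d); intros x Hx.
  destruct (Hgk x Hx) as [Hg Hk]; specialize (HB x Hx).
  assert (mu * Rabs (g x - k x) <= mu * (e / (mu + 1) * x + B))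
    by (apply Rmult_le_compat_l; lra).
  assert (mu * (e / (mu + 1)) <= e).
  { apply Rmult_le_reg_r with (mu + 1); [lra|].
    replace (mu * (e / (mu + 1)) * (mu + 1)) with (mu * e) by (field; lra); nra. }
  eapply Rle_trans; [exact (Hlip _ _ Hg Hk)|]; nra.
Qed.

Lemma is_lim_ratio_of_sublinearly_close f :
  sublinearly_close f (fun x => x) -> is_lim (fun x => f x / x) p_infty 1.
Proof.
  intros Hf; apply is_lim_p_infty_iff; intros eps Heps.
  destruct (Hf (eps / 2)) as [B HB]; [lra|].
  exists (2 * Rabs B / eps + 1); intros x Hx.
  assert (0 <= 2 * Rabs B / eps) by (apply Rle_div_r; [lra|]; rewrite Rmult_0_l;
    pose proof (Rabs_pos B); lra).
  assert (Hx0 : 0 < x) by lra.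
  assert (HBx : 2 * Rabs B < eps * x).
  { replace (2 * Rabs B) with (2 * Rabs B / eps * eps) by (field; lra); nra. }
  replace (f x / x - 1) with ((f x - x) / x) by (field; lra).
  rewrite Rabs_div, (Rabs_pos_eq x) by lra.
  apply Rlt_div_l; [lra|]; specialize (HB x (Rlt_le _ _ Hx0)).
  pose proof (Rle_abs B); lra.
Qed.

Lemma sublinearly_close_of_is_lim_ratio f mu d :
  0 <= mu ->
  (forall x y, 0 <= x -> 0 <= y -> Rabs (f x - f y) <= mu * Rabs (x - y) + d) ->
  is_lim (fun x => f x / x) p_infty 1 -> sublinearly_close f (fun x => x).
Proof.
  intros Hmu Hlip Hlim e He.
  destruct (proj1 (is_lim_p_infty_iff _ _) Hlim e He) as [Y HY].
  exists ((mu + 1) * Rabs Y + Rabs d + Rabs (f 0)); intros x Hx.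
  pose proof (Rabs_pos (f 0)); pose proof (Rabs_pos Y).
  pose proof (Rle_abs d); pose proof (Rabs_pos d).
  assert (0 <= e * x) by (apply Rmult_le_pos; lra).
  destruct (Rle_dec x (Rabs Y)) as [Hsmall|Hlarge].
  - specialize (Hlip x 0 Hx (Rle_refl 0)).
    rewrite Rminus_0_r, (Rabs_pos_eq x) in Hlip by lra.
    assert (Htri : Rabs (f x - x) <= Rabs (f x - f 0) + (Rabs (f 0) + x)).
    { replace (f x - x) with ((f x - f 0) + (f 0 - x)) by ring.
      eapply Rle_trans; [apply Rabs_triang|].
      apply Rplus_le_compat_l; apply Rabs_le_between; pose proof (Rle_abs (f 0));
        pose proof (Rabs_maj2 (f 0)); lra. }
    assert (mu * x <= mu * Rabs Y) by (apply Rmult_le_compat_l; lra).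
    lra.
  - assert (HxY : Y < x) by (pose proof (Rle_abs Y); lra).
    specialize (HY x HxY); apply Rabs_lt_between in HY.
    replace (f x - x) with ((f x / x - 1) * x) by (field; lra).
    rewrite Rabs_mult, (Rabs_pos_eq x) by lra.
    assert (Rabs (f x / x - 1) * x <= e * x)
      by (apply Rmult_le_compat_r; [lra|apply Rabs_le_between; lra]).
    assert (0 <= (mu + 1) * Rabs Y) by (apply Rmult_le_pos; lra).
    lra.
Qed.

Lemma inN_iff f : inN f <-> is_QI f /\ sublinearly_close f (fun x => x).
Proof.
  split.
  - intros [Hf Hlim]; split; [exact Hf|].
    destruct (is_QI_coarse_lipschitz f Hf) as [mu [d [Hmu Hlip]]].
    exact (sublinearly_close_of_is_lim_ratio f mu d Hmu Hlip Hlim).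
  - intros [Hf Hclose]; split; [exact Hf|].
    exact (is_lim_ratio_of_sublinearly_close f Hclose).
Qed.

(** * [N] is a normal subgroup *)

Lemma inN_qi_equiv f g : inN f -> is_QI g -> qi_equiv g f -> inN g.
Proof.
  intros Hf Hg Hgf; apply inN_iff in Hf as [_ Hf]; apply inN_iff; split; [exact Hg|].
  exact (sublinearly_close_trans _ _ _ (qi_equiv_sublinearly_close _ _ Hgf) Hf).
Qed.

Lemma inN_id : inN (fun x => x).
Proof.
  apply inN_iff; split; [exact is_QI_id|].
  intros e He; exists 0; intros x Hx; rewrite Rminus_diag, Rabs_R0.
  assert (0 <= e * x) by (apply Rmult_le_pos; lra); lra.
Qed.

Lemma inN_comp f g : inN f -> inN g -> inN (fun x => f (g x)).
Proof.
  intros Hf Hg; apply inN_iff in Hf as [Hfq Hf]; apply inN_iff in Hg as [Hgq Hg].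
  apply inN_iff; split; [exact (is_QI_comp f g Hfq Hgq)|].
  destruct (is_QI_linear_bound g Hgq) as [a [b Hab]].
  exact (sublinearly_close_trans _ _ _
           (sublinearly_close_comp_r f (fun x => x) g a b Hf Hab) Hg).
Qed.

Lemma inN_inverse f g : inN f -> qi_inverse g f -> inN g.
Proof.
  intros Hf [Hgq [_ Hfg]]; apply inN_iff in Hf as [_ Hf].
  apply inN_iff; split; [exact Hgq|].
  destruct (is_QI_linear_bound g Hgq) as [a [b Hab]].
  apply (sublinearly_close_trans _ (fun x => f (g x))).
  - exact (sublinearly_close_sym _ _ (sublinearly_close_comp_r f (fun x => x) g a b Hf Hab)).
  - exact (qi_equiv_sublinearly_close _ _ Hfg).
Qed.

Lemma inN_conj f f' h : is_QI f -> qi_inverse f' f -> inN h ->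
  inN (fun x => f (h (f' x))).
Proof.
  intros Hfq [Hf'q [_ Hff']] Hh; apply inN_iff in Hh as [Hhq Hh].
  apply inN_iff; split; [exact (is_QI_comp _ _ Hfq (is_QI_comp _ _ Hhq Hf'q))|].
  destruct (is_QI_linear_bound f' Hf'q) as [a [b Hab]].
  destruct (is_QI_coarse_lipschitz f Hfq) as [mu [d [Hmu Hlip]]].
  apply (sublinearly_close_trans _ (fun x => f (f' x))).
  - apply (sublinearly_close_comp_l f _ _ mu d Hmu Hlip).
    + intros x Hx; pose proof (proj1 (Hab x Hx)); split; [exact (proj1 Hhq _ H)|exact H].
    + exact (sublinearly_close_comp_r h (fun x => x) f' a b Hh Hab).
  - exact (qi_equiv_sublinearly_close _ _ Hff').
Qed.

Lemma Rabs_sin_ge (a : R) : Rabs a <= 1 -> 4 / 5 * Rabs a <= Rabs (sin a).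
Proof.
  assert (Hpi : 1 <= PI) by (pose proof PI2_1; lra).
  assert (Hpos : forall t, 0 <= t <= 1 -> 4 / 5 * t <= sin t).
  { intros t Ht; destruct (sin_bound t 0 (proj1 Ht) ltac:(lra)) as [A _].
    unfold sin_approx, sin_term in A; simpl in A; nra. }
  intros Ha; destruct (Rle_dec 0 a).
  - rewrite Rabs_pos_eq in Ha |- * by lra.
    pose proof (Hpos a ltac:(lra)); rewrite Rabs_pos_eq; lra.
  - rewrite Rabs_left in Ha |- * by lra.
    pose proof (Hpos (- a) ltac:(lra)) as H; rewrite sin_neg in H.
    rewrite Rabs_left1; lra.
Qed.

(* Expand sin (a + b): as |cos b| >= 1/2, sin a is controlled by sin (a + b) and sin b. *)
Lemma Rabs_le_sin_shift (a b : R) : Rabs a <= 1 -> Rabs (sin b) <= 1 / 2 ->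
  Rabs a <= 5 / 2 * (Rabs (sin (a + b)) + Rabs (sin b)).
Proof.
  intros Ha Hb; pose proof (Rabs_sin_ge a Ha) as Hsa.
  rewrite sin_plus.
  pose proof (sin2_cos2 b) as E; unfold Rsqr in E.
  assert (Hcb : 1 / 2 <= Rabs (cos b)).
  { apply Rabs_le_between in Hb; unfold Rabs; destruct (Rcase_abs (cos b)); nra. }
  assert (Hca : Rabs (cos a) <= 1) by (apply Rabs_le_between, COS_bound).
  assert (T : Rabs (sin a * cos b) <=
              Rabs (sin a * cos b + cos a * sin b) + Rabs (cos a * sin b)).
  { replace (sin a * cos b) with ((sin a * cos b + cos a * sin b) + - (cos a * sin b))
      at 1 by ring.
    rewrite <- (Rabs_Ropp (cos a * sin b)); apply Rabs_triang. }
  rewrite !Rabs_mult in T.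
  pose proof (Rabs_pos (sin a)); pose proof (Rabs_pos (sin b)); pose proof (Rabs_pos (cos a)).
  nra.
Qed.

Lemma sin_grid (nu : R) : 0 < nu <= 1 -> exists N : nat, forall u, 0 <= u ->
  exists j, (j <= N)%nat /\ Rabs (sin (u - INR j * nu)) <= nu.
Proof.
  intros Hnu; assert (Hpi : 1 <= PI) by (pose proof PI2_1; lra).
  assert (H2 : 0 <= 2 * PI / nu) by (apply Rlt_le, Rdiv_lt_0_compat; lra).
  destruct (nfloor_ex _ H2) as [N HN]; exists N; intros u Hu.
  assert (H3 : 0 <= u / (2 * PI))
    by (apply Rmult_le_pos; [lra|apply Rlt_le, Rinv_0_lt_compat; lra]).
  destruct (nfloor_ex _ H3) as [n Hn].
  set (r := u - 2 * INR n * PI).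
  assert (Hr : 0 <= r < 2 * PI).
  { unfold r; assert (u / (2 * PI) * (2 * PI) = u) by (field; lra); nra. }
  assert (H4 : 0 <= r / nu) by (apply Rmult_le_pos; [lra|apply Rlt_le, Rinv_0_lt_compat; lra]).
  destruct (nfloor_ex _ H4) as [j Hj]; exists j.
  assert (E1 : r / nu * nu = r) by (field; lra).
  assert (E2 : 2 * PI / nu * nu = 2 * PI) by (field; lra).
  split.
  - assert (INR j < INR (S N)).
    { rewrite S_INR; assert (r / nu < 2 * PI / nu)
        by (apply Rmult_lt_compat_r; [apply Rinv_0_lt_compat|]; lra).
      lra. }
    apply INR_lt in H; lia.
  - replace (u - INR j * nu) with ((r - INR j * nu) + 2 * INR n * PI) by (unfold r; ring).
    rewrite sin_period.
    assert (Ht : 0 <= r - INR j * nu < nu) by nra.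
    destruct (Req_dec (r - INR j * nu) 0) as [->|Hne]; [rewrite sin_0, Rabs_R0; lra|].
    pose proof (sin_lt_x (r - INR j * nu) ltac:(lra)).
    pose proof (sin_ge_0 (r - INR j * nu) ltac:(lra) ltac:(lra)).
    rewrite Rabs_pos_eq; lra.
Qed.

(** * The test maps *)

Definition wave (w th y : R) : R := y * (1 + / 8 * sin (w * ln y - th)).

Lemma wave_sub_id w th y : wave w th y - y = y * (/ 8 * sin (w * ln y - th)).
Proof. unfold wave; ring. Qed.

Lemma wave_nonneg w th y : 0 <= y -> 0 <= wave w th y.
Proof. intros Hy; unfold wave; pose proof (SIN_bound (w * ln y - th)); nra. Qed.

Lemma wave_derive w th c : 0 < c ->
  derivable_pt_lim (wave w th) c
    (1 + / 8 * sin (w * ln c - th) + / 8 * w * cos (w * ln c - th)).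
Proof.
  intros Hc; apply is_derive_Reals; unfold wave; auto_derive; [lra|].
  replace (w * ln c + - th) with (w * ln c - th) by ring; field; lra.
Qed.

Lemma wave_increment w th y z : 0 < w <= 1 -> 0 <= z <= y ->
  5 / 8 * (y - z) <= wave w th y - wave w th z <= 11 / 8 * (y - z).
Proof.
  intros Hw Hzy; destruct (Req_dec z y) as [<-|Hne]; [lra|].
  destruct (Req_dec z 0) as [->|Hz].
  - unfold wave at 2; rewrite Rmult_0_l; unfold wave.
    pose proof (SIN_bound (w * ln y - th)); split; nra.
  - destruct (MVT_cor2 (wave w th)
      (fun c => 1 + / 8 * sin (w * ln c - th) + / 8 * w * cos (w * ln c - th)) z y)
      as [c [Hc _]]; [lra|intros c Hc; apply wave_derive; lra|].
    rewrite Hc; pose proof (SIN_bound (w * ln c - th)); pose proof (COS_bound (w * ln c - th)).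
    assert (5 / 8 <= 1 + / 8 * sin (w * ln c - th) + / 8 * w * cos (w * ln c - th) <= 11 / 8)
      by nra.
    split; nra.
Qed.

Lemma wave_bilipschitz w th y z : 0 < w <= 1 -> 0 <= y -> 0 <= z ->
  5 / 8 * Rabs (y - z) <= Rabs (wave w th y - wave w th z) <= 11 / 8 * Rabs (y - z).
Proof.
  intros Hw Hy Hz; destruct (Rle_dec z y).
  - pose proof (wave_increment w th y z Hw ltac:(lra)).
    rewrite !Rabs_pos_eq by lra; lra.
  - pose proof (wave_increment w th z y Hw ltac:(lra)).
    rewrite (Rabs_left1 (y - z)), Rabs_left1 by lra; lra.
Qed.

Lemma exists_near_value_of_steps (g : R -> R) L y : g 0 <= y ->
  (forall n : nat, Rabs (g (INR (S n)) - g (INR n)) <= L) ->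
  forall n : nat, y < g (INR n) -> exists k : nat, Rabs (g (INR k) - y) <= L.
Proof.
  intros H0 HL n; induction n as [|n IH]; intros Hn; [simpl in Hn; lra|].
  destruct (Rlt_dec y (g (INR n))) as [Hlt|Hge]; [exact (IH Hlt)|].
  exists n; specialize (HL n); apply Rabs_le_between in HL; apply Rabs_le_between; lra.
Qed.

Lemma is_QI_wave w th : 0 < w <= 1 -> is_QI (wave w th).
Proof.
  intros Hw; apply (is_QI_intro _ 2 0 2); try lra; [apply wave_nonneg| |].
  - intros x y Hx Hy; pose proof (wave_bilipschitz w th x y Hw Hx Hy).
    pose proof (Rabs_pos (x - y)); lra.
  - intros y Hy.
    assert (Hg0 : wave w th 0 = 0) by (unfold wave; ring).
    destruct (nfloor_ex (2 * y) ltac:(lra)) as [n Hn].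
    destruct (exists_near_value_of_steps (wave w th) 2 y ltac:(lra)) with (n := S n)
      as [k Hk].
    + intros i; pose proof (wave_bilipschitz w th (INR (S i)) (INR i) Hw (pos_INR _) (pos_INR _)).
      rewrite S_INR in *; replace (INR i + 1 - INR i) with 1 in H by ring.
      rewrite Rabs_R1 in H; lra.
    + pose proof (wave_increment w th (INR (S n)) 0 Hw (conj (Rle_refl 0) (pos_INR _))).
      rewrite Hg0, S_INR in *; lra.
    + exists (INR k); split; [apply pos_INR|exact Hk].
Qed.

(** * Classes central modulo [N] lie in [N] *)

Lemma is_lim_ratio_of_log_diff f :
  Rbar_locally p_infty (fun x => 0 < f x) ->
  is_lim (fun x => ln (f x) - ln x) p_infty 0 -> is_lim (fun x => f x / x) p_infty 1.
Proof.
  intros Hpos Hlim.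
  assert (Hexp : continuous exp 0)
    by (apply (ex_derive_continuous (V := R_NormedModule)); auto_derive; auto).
  pose proof (is_lim_comp_continuous _ _ _ _ Hlim Hexp) as H; rewrite exp_0 in H.
  apply (is_lim_ext_loc (fun x => exp (ln (f x) - ln x))); [|exact H].
  generalize (filter_and _ _ Hpos (eventually_gt 0)); apply filter_imp.
  intros x [Hfx Hx]; rewrite <- ln_div, exp_ln by (try apply Rdiv_lt_0_compat; lra).
  reflexivity.
Qed.

Section CentralModN.

Variables (f : R -> R) (mu d m : R).
Hypothesis Hf : is_QI f.
Hypothesis Hmu : 0 <= mu.
Hypothesis Hlip :
  forall x y, 0 <= x -> 0 <= y -> Rabs (f x - f y) <= mu * Rabs (x - y) + d.
Hypothesis Hcentral : forall g, is_QI g ->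
  exists h, inN h /\ qi_equiv (fun x => f (g x)) (fun x => g (f (h x))).
Hypothesis Hm : 1 <= m.
Hypothesis Hgrowth : Rbar_locally p_infty (fun x => x / m <= f x <= m * x).

(* Compare [f (wave x)] with [wave (f (h x))] at a point [x] where [wave] is
   almost the identity: then so is [wave] at [f x], up to an error [o(x)]. *)
Lemma sin_wave_phase_transfer w th eps : 0 < w <= 1 -> 0 < eps ->
  Rbar_locally p_infty (fun x =>
    f x * Rabs (sin (w * ln (f x) - th))
    <= mu * x * Rabs (sin (w * ln x - th)) + eps * x).
Proof.
  intros Hw Heps.
  destruct (Hcentral (wave w th) (is_QI_wave w th Hw)) as [h [Hh [C HC]]].
  apply inN_iff in Hh as [Hhq Hh].
  set (e := eps / (22 * (mu + 1))).
  assert (He : 0 < e) by (apply Rdiv_lt_0_compat; lra).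
  assert (Hmue : 11 * mu * e <= eps / 2).
  { apply Rmult_le_reg_r with (22 * (mu + 1)); [lra|].
    replace (11 * mu * e * (22 * (mu + 1))) with (11 * mu * eps) by (unfold e; field; lra).
    nra. }
  destruct (Hh e He) as [B HB].
  set (K := 11 * (mu * B + d) + 8 * (C + d)).
  exists (Rmax 0 (2 * K / eps)); intros x Hx.
  apply Rmax_Rlt in Hx as [Hx0 HxK].
  assert (HKx : K < eps / 2 * x).
  { replace K with (2 * K / eps * (eps / 2)) by (field; lra); nra. }
  assert (Hxnn : 0 <= x) by lra.
  pose proof (proj1 Hhq x Hxnn) as Hhx.
  pose proof (proj1 Hf x Hxnn) as Hfx.
  pose proof (wave_nonneg w th x Hxnn) as Hwx.
  set (S := Rabs (sin (w * ln (f x) - th))).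
  set (s := Rabs (sin (w * ln x - th))).
  assert (E1 : Rabs (wave w th (f x) - f x) = f x * S / 8).
  { rewrite wave_sub_id, !Rabs_mult, (Rabs_pos_eq (f x)), (Rabs_pos_eq (/ 8)) by lra.
    unfold S; field. }
  assert (E2 : Rabs (wave w th (f x) - wave w th (f (h x)))
               <= 11 / 8 * (mu * (e * x + B) + d)).
  { pose proof (wave_bilipschitz w th _ _ Hw Hfx (proj1 Hf _ Hhx)) as [_ G].
    specialize (Hlip x (h x) Hxnn Hhx); specialize (HB x Hxnn).
    rewrite Rabs_minus_sym in HB.
    assert (mu * Rabs (x - h x) <= mu * (e * x + B)) by (apply Rmult_le_compat_l; lra).
    lra. }
  assert (E3 : Rabs (f (wave w th x) - wave w th (f (h x))) <= C) by exact (HC x Hxnn).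
  assert (E4 : Rabs (f (wave w th x) - f x) <= mu * (x * s / 8) + d).
  { specialize (Hlip _ _ Hwx Hxnn).
    rewrite wave_sub_id, !Rabs_mult, (Rabs_pos_eq x), (Rabs_pos_eq (/ 8)) in Hlip by lra.
    replace (x * s / 8) with (x * (/ 8 * s)) by field; exact Hlip. }
  pose proof (Rabs_triang_3 (wave w th (f x)) (f x) (wave w th (f (h x)))
                (f (wave w th x))) as Tri.
  assert (0 <= mu * e * x) by (apply Rmult_le_pos; [apply Rmult_le_pos|]; lra).
  unfold K in HKx; nra.
Qed.

Lemma log_ratio_bounded w : 0 <= w -> w * ln m <= 1 ->
  Rbar_locally p_infty (fun x => Rabs (w * ln (f x) - w * ln x) <= 1).
Proof.
  intros Hw Hwm; generalize (filter_and _ _ Hgrowth (eventually_gt 0)); apply filter_imp.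
  intros x [[Hlo Hhi] Hx].
  assert (0 < x / m) by (apply Rdiv_lt_0_compat; lra).
  assert (L1 : ln (f x) <= ln m + ln x) by (rewrite <- ln_mult by lra; apply ln_le; lra).
  assert (L2 : ln x - ln m <= ln (f x)) by (rewrite <- ln_div by lra; apply ln_le; lra).
  replace (w * ln (f x) - w * ln x) with (w * (ln (f x) - ln x)) by ring.
  apply Rabs_le_between; split; nra.
Qed.

(* Finitely many phases [j nu] suffice: every [w ln x] is within [nu] of one
   of them modulo [2 PI], and for that phase the previous lemma applies. *)
Lemma log_ratio_small w tau : 0 < w <= 1 -> w * ln m <= 1 -> 0 < tau <= 1 ->
  Rbar_locally p_infty (fun x => Rabs (w * ln (f x) - w * ln x) <= tau).
Proof.
  intros Hw Hwm Htau.
  assert (Hmmu : 0 <= m * mu) by (apply Rmult_le_pos; lra).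
  set (nu := tau / (5 * (m * mu + 2))).
  assert (Hnu : nu * (5 * (m * mu + 2)) = tau) by (unfold nu; field; lra).
  assert (Hnu0 : 0 < nu <= 1 / 10) by (split; [apply Rdiv_lt_0_compat|]; nra).
  destruct (sin_grid nu ltac:(lra)) as [N HN].
  assert (Hphases := filter_forall_le_nat (Rbar_locally p_infty)
    (fun j x => f x * Rabs (sin (w * ln (f x) - INR j * nu))
                <= mu * x * Rabs (sin (w * ln x - INR j * nu)) + nu / m * x)
    (fun j => sin_wave_phase_transfer w (INR j * nu) (nu / m) Hw
                ltac:(apply Rdiv_lt_0_compat; lra)) N).
  pose proof (log_ratio_bounded w (Rlt_le _ _ (proj1 Hw)) Hwm) as Hbounded.
  generalize (filter_and _ _ (filter_and _ _ Hphases Hgrowth)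
                (filter_and _ _ Hbounded (eventually_gt 1))).
  apply filter_imp; intros x [[Hph [Hlo _]] [Hbd Hx]].
  assert (Hu : 0 <= w * ln x)
    by (apply Rmult_le_pos; [lra|rewrite <- ln_1; apply ln_le; lra]).
  destruct (HN _ Hu) as [j [Hj Hs]]; specialize (Hph j Hj).
  set (S := Rabs (sin (w * ln (f x) - INR j * nu))) in Hph.
  set (s := Rabs (sin (w * ln x - INR j * nu))) in Hph, Hs.
  assert (HS0 : 0 <= S) by apply Rabs_pos.
  assert (HSb : S <= (m * mu + 1) * nu).
  { assert (Hxm : x / m * S <= f x * S) by (apply Rmult_le_compat_r; lra).
    assert (mu * x * s <= mu * x * nu) by (apply Rmult_le_compat_l; nra).
    apply Rmult_le_reg_r with (x / m); [apply Rdiv_lt_0_compat; lra|].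
    replace ((m * mu + 1) * nu * (x / m)) with (mu * x * nu + nu / m * x) by (field; lra).
    lra. }
  assert (Hs2 : s <= 1 / 2) by lra.
  pose proof (Rabs_le_sin_shift (w * ln (f x) - w * ln x) (w * ln x - INR j * nu) Hbd Hs2)
    as Hkey.
  replace (w * ln (f x) - w * ln x + (w * ln x - INR j * nu))
    with (w * ln (f x) - INR j * nu) in Hkey by ring.
  assert ((m * mu + 1) * nu + nu = tau / 5) by (rewrite <- Hnu; field).
  fold S s in Hkey; lra.
Qed.

Lemma is_lim_log_ratio : is_lim (fun x => ln (f x) - ln x) p_infty 0.
Proof.
  assert (Hlm : 0 <= ln m) by (rewrite <- ln_1; apply ln_le; lra).
  set (w := / (ln m + 1)).
  assert (Hwm : w * (ln m + 1) = 1) by (unfold w; field; lra).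
  assert (Hw : 0 < w <= 1) by (split; [unfold w; apply Rinv_0_lt_compat; lra|nra]).
  apply is_lim_p_infty_iff; intros eps Heps.
  set (tau := Rmin 1 (w * eps / 2)).
  assert (Htau : 0 < tau <= 1)
    by (split; [apply Rmin_glb_lt; [lra|nra]|apply Rmin_l]).
  assert (Htau_eps : tau <= w * eps / 2) by apply Rmin_r.
  generalize (log_ratio_small w tau Hw ltac:(nra) Htau); apply filter_imp.
  intros x Hx.
  replace (w * ln (f x) - w * ln x) with (w * (ln (f x) - ln x)) in Hx by ring.
  rewrite Rabs_mult, (Rabs_pos_eq w) in Hx by lra; rewrite Rminus_0_r.
  apply Rmult_lt_reg_l with w; lra.
Qed.

End CentralModN.

Lemma inN_of_central f : is_QI f ->
  (forall g, is_QI g ->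
     exists h, inN h /\ qi_equiv (fun x => f (g x)) (fun x => g (f (h x)))) ->
  inN f.
Proof.
  intros Hf Hcentral; split; [exact Hf|].
  destruct (is_QI_coarse_lipschitz f Hf) as [mu [d [Hmu Hlip]]].
  destruct (is_QI_growth f Hf) as [m [Hm Hgrowth]].
  apply is_lim_ratio_of_log_diff.
  - generalize (filter_and _ _ Hgrowth (eventually_gt 0)); apply filter_imp.
    intros x [[Hlo _] Hx]; assert (0 < x / m) by (apply Rdiv_lt_0_compat; lra); lra.
  - exact (is_lim_log_ratio f mu d m Hf Hmu Hlip Hcentral Hm Hgrowth).
Qed.

Theorem mainTheorem7 :
  (forall f g, inN f -> is_QI g -> qi_equiv g f -> inN g) /\
  inN (fun x => x) /\
  (forall f g, inN f -> inN g -> inN (fun x => f (g x))) /\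
  (forall f g, inN f -> qi_inverse g f -> inN g) /\
  (forall f f' h, is_QI f -> qi_inverse f' f -> inN h ->
     inN (fun x => f (h (f' x)))) /\
  (forall f, is_QI f ->
     (forall g, is_QI g ->
        exists h, inN h /\ qi_equiv (fun x => f (g x)) (fun x => g (f (h x)))) ->
     inN f).
Proof.
  exact (conj inN_qi_equiv (conj inN_id (conj inN_comp
           (conj inN_inverse (conj inN_conj inN_of_central))))).
Qed.
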